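(* There exist two winners with endowments $w_1>w_2>0$, queue scores $r_1>r_2$, and a budget $B\in(w_1-w_2,w_1]$ such that the queue rule violates monotonicity, namely $s'_1<s'_2$, where $s'_i=w_i-x_i$ is the post-ADL surviving endowment and $x_i$ the amount seized.
   Context: Winners have haircutable endowments $w_i>0$ and ranking scores $r_i$. The queue rule with budget $B$ works as follows: - It processes winners in decreasing order of score. - Each processed winner $j$ has $x_j=\min\{w_j,\text{remaining budget}\}$ seized. - The seized amount is subtracted from the remaining budget, which starts at $B$. *)

From mathcomp Require Import all_boot all_order all_algebra.
Set Implicit Arguments. Unset Strict Implicit. Unset Printing Implicit Defensive.
Import Order.TTheory GRing.Theory Num.Theory.
Local Open Scope ring_scope.

Section Queue.
Variables (R : realFieldType) (I : finType).

(* Processing order: winners sorted by decreasing score (stable sort;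
   ties are broken by the enumeration order of I). *)
Definition queue_order (r : I -> R) : seq I :=
  sort (fun i j => r j <= r i) (enum I).

Fixpoint queue_seize (w : I -> R) (b : R) (s : seq I) : I -> R :=
  match s with
  | [::] => fun _ => 0
  | j :: s' =>
      let x := Num.min (w j) b in
      fun i => if i == j then x else queue_seize w (b - x) s' i
  end.

Definition queue_rule (w r : I -> R) (B : R) (i : I) : R :=
  queue_seize w B (queue_order r) i.

Definition queue_survivor (w r : I -> R) (B : R) (i : I) : R :=
  w i - queue_rule w r B i.

End Queue.

(** When the top-ranked winner's endowment covers the whole budget, the queue
    rule seizes [B] from that winner and nothing from anyone else.  With two
    winners this leaves [w1 - B] to winner 1 and [w2] to winner 2, and
    [w1 - B < w2] exactly when [B > w1 - w2].  So every instance with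
    [w1 > w2 > 0], [r1 > r2] and [w1 - w2 < B <= w1] violates monotonicity;
    [w = (2, 1)], [B = 2] is one. *)

From mathcomp Require Import all_boot all_order all_algebra.
Set Implicit Arguments. Unset Strict Implicit. Unset Printing Implicit Defensive.
Import Order.TTheory GRing.Theory Num.Theory.
Local Open Scope ring_scope.

Section QueueRule.
Variables (R : realFieldType) (I : finType).
Implicit Types (w r : I -> R) (b : R).

Lemma queue_seize_budget0 w (s : seq I) i :
  (forall j, 0 <= w j) -> queue_seize w 0 s i = 0.
Proof.
move=> w_ge0; elim: s => [|j s IHs] //=.
by rewrite (min_r (w_ge0 j)) subr0 IHs if_same.
Qed.

Lemma queue_rule_head_absorbs w r b j (s : seq I) i :
  (forall k, 0 <= w k) -> queue_order r = j :: s -> b <= w j ->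
  queue_rule w r b i = if i == j then b else 0.
Proof.
move=> w_ge0 order_r b_le; rewrite /queue_rule order_r /= (min_r b_le).
by rewrite subrr queue_seize_budget0.
Qed.

End QueueRule.

Lemma enum_I2 : enum 'I_2 = [:: ord0; ord_max].
Proof. by apply: (inj_map val_inj); rewrite val_enum_ord. Qed.

Lemma queue_order_I2 (R : realFieldType) (r : 'I_2 -> R) :
  r ord_max < r ord0 -> queue_order r = [:: ord0; ord_max].
Proof.
move=> r21; rewrite /queue_order enum_I2 sorted_sort //= ?(ltW r21) //.
by move=> a b c ba cb; apply: le_trans cb ba.
Qed.

Lemma queue_rule_not_monotone_I2 (R : realFieldType) (w r : 'I_2 -> R) B :
  0 < w ord_max -> w ord_max < w ord0 -> r ord_max < r ord0 ->
  w ord0 - w ord_max < B -> B <= w ord0 ->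
  queue_survivor w r B ord0 < queue_survivor w r B ord_max.
Proof.
move=> w2_gt0 w21 r21 B_gt B_le.
have w_ge0 (k : 'I_2) : 0 <= w k.
  have := mem_enum 'I_2 k; rewrite enum_I2 !inE => /orP[] /eqP ->.
    by rewrite ltW // (lt_trans w2_gt0).
  exact: ltW.
have seized i : queue_rule w r B i = if i == ord0 then B else 0.
  exact: queue_rule_head_absorbs w_ge0 (queue_order_I2 r21) B_le.
rewrite /queue_survivor !seized eqxx /= subr0.
by rewrite ltrBlDr addrC -ltrBlDr.
Qed.

Theorem mainTheorem7 (R : realFieldType) :
  exists (w r : 'I_2 -> R) (B : R),
    0 < w ord_max /\ w ord_max < w ord0 /\
    r ord_max < r ord0 /\
    w ord0 - w ord_max < B /\ B <= w ord0 /\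
    queue_survivor w r B ord0 < queue_survivor w r B ord_max.
Proof.
pose w (i : 'I_2) : R := if i == ord0 then 2 else 1.
pose r (i : 'I_2) : R := if i == ord0 then 1 else 0.
have w2_gt0 : 0 < w ord_max by rewrite ltr01.
have w21 : w ord_max < w ord0 by rewrite ltr1n.
have r21 : r ord_max < r ord0 by rewrite ltr01.
have B_gt : w ord0 - w ord_max < 2 by rewrite /w /= addrK ltr1n.
exists w, r, 2; do 5!split => //.
exact: queue_rule_not_monotone_I2.
Qed.
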